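(* Let $r$ be a positive integer and $p$ a prime. Then $p_{b(r)+1}^2\notin F_r$ and $p^3\notin F_r$.
   Context: $p_i$ denotes the $i$-th prime. For a positive integer $r$, $S_r$ is the multiplicative arithmetic function with $S_r(q^{\alpha})=0$ if $q\leq r$ and $S_r(q^{\alpha})=q^{\alpha-1}(q-r)$ if $q>r$, for all primes $q$ and positive integers $\alpha$. $B_r=\{n\in\mathbb{N}: S_r(n)>0\}$ (positive integers whose smallest prime factor exceeds $r$, together with $1$). $F_r$ is the set of $n\in B_r$ such that $S_r(n)<S_r(m)$ for all $m\in B_r$ with $m>n$. $b(1)=0$, and for $r\geq 2$, $b(r)$ is the largest integer with $p_{b(r)}\leq r$. *)

From mathcomp Require Import all_boot.
Set Implicit Arguments. Unset Strict Implicit. Unset Printing Implicit Defensive.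

Lemma ex_prime_above (n : nat) : exists p, (n < p) && prime p.
Proof. by case: (prime_above n) => p Hp Pp; exists p; rewrite Hp Pp. Qed.

Definition next_prime (n : nat) : nat := ex_minn (ex_prime_above n).

(* nth_prime i = p_i, the i-th prime (1-indexed: p_1 = 2, p_2 = 3, ...);
   nth_prime 0 = 1 is an auxiliary value. *)
Fixpoint nth_prime (i : nat) : nat :=
  match i with
  | 0 => 1
  | i'.+1 => next_prime (nth_prime i')
  end.

(* b(r): largest integer b with p_b <= r (b(1) = 0, since p_0 := 1 <= r and p_1 = 2).
   Since p_b > b, such b satisfy b < r.+1, so the bounded max is exact. *)
Definition bidx (r : nat) : nat := \max_(b < r.+1 | nth_prime b <= r) b.

Definition S (r n : nat) : nat :=
  \prod_(q <- primes n) (if q <= r then 0 else q ^ (logn q n).-1 * (q - r)).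

Definition inB (r n : nat) : Prop := 0 < n /\ 0 < S r n.

Definition inF (r n : nat) : Prop :=
  inB r n /\ forall m, inB r m -> n < m -> S r n < S r m.

From mathcomp Require Import all_boot zify ring.
Set Implicit Arguments. Unset Strict Implicit. Unset Printing Implicit Defensive.

(* Let q be the least prime above r.  A prime P in (q, q + r] gives
   q^(k-1) P > q^k with S_r(q^(k-1) P) = q^(k-2) (q - r) (P - r) <= S_r(q^k),
   so q^k is not in F_r for k >= 2.  For a prime p > q, a prime P in (n, 2n]
   with n = p^2 / q gives p q P > p^3 and, since q <= 2r,
   S_r(p q P) <= (p - r) (q - r) 2n <= (p - r) q n <= S_r(p^3).
   Primes p <= r have S_r(p^3) = 0.

   Both primes come from a prime in (n, 3n/2] for every n >= 2.  Below 200000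
   a ladder of primes, each at most 3/2 of its predecessor, provides it;
   beyond, Chebyshev's weights (30m)! m! / ((15m)! (10m)! (6m)!) bound
   exp(psi(x)) from both sides tightly enough to rule out a prime-free
   interval (x, 3x/2]. *)

(** * Chebyshev's function *)

Lemma dvdn_logn_le a b : 0 < a -> 0 < b ->
  (forall p, prime p -> logn p a <= logn p b) -> a %| b.
Proof.
move=> a_gt0 b_gt0 le_ab; apply/(dvdn_partP _ a_gt0) => p.
rewrite mem_primes => /andP[p_pr _].
by rewrite p_part pfactor_dvdn // le_ab.
Qed.

Lemma logn_prod_primes q (e : nat -> nat) N : prime q ->
  logn q (\prod_(0 <= p < N | prime p) p ^ e p) = (q < N) * e q.
Proof.
move=> q_pr; elim: N => [|N IH]; first by rewrite big_geq // logn1.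
rewrite big_mkcond big_nat_recr //= -big_mkcond.
have prod_gt0 : 0 < \prod_(0 <= p < N | prime p) p ^ e p.
  by apply: prodn_cond_gt0 => i /prime_gt0 i_gt0; rewrite expn_gt0 i_gt0.
case: ifP => N_pr.
  rewrite lognM // ?expn_gt0 ?prime_gt0 // IH lognX logn_prime //.
  have [->|qN] := eqVneq q N; first by rewrite ltnn ltnSn /=; lia.
  by rewrite ltnS [q <= N]leq_eqVlt (negbTE qN) /=; lia.
rewrite muln1 IH ltnS [q <= N]leq_eqVlt; have [qN|] := eqVneq q N => //=.
by rewrite -qN q_pr in N_pr.
Qed.

(* [Psi n] is exp(psi(n)) = lcm(1, ..., n). *)
Definition Psi n := \prod_(0 <= p < n.+1 | prime p) p ^ trunc_log p n.

Lemma Psi_gt0 n : 0 < Psi n.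
Proof. by apply: prodn_cond_gt0 => i /prime_gt0 i_gt0; rewrite expn_gt0 i_gt0. Qed.

Lemma logn_Psi q n : prime q -> logn q (Psi n) = trunc_log q n.
Proof.
move=> q_pr; rewrite /Psi logn_prod_primes //; case: ltnP => [_|nq]; first by rewrite mul1n.
by rewrite mul0n; apply/esym/eqP; rewrite trunc_log_eq0; apply/orP; right; lia.
Qed.

Lemma leq_Psi m n : m <= n -> Psi m <= Psi n.
Proof.
move=> le_mn; apply: dvdn_leq; first exact: Psi_gt0.
apply: dvdn_logn_le; rewrite ?Psi_gt0 // => p p_pr.
by rewrite !logn_Psi // leq_trunc_log.
Qed.

Lemma Psi5 : Psi 5 = 60.
Proof. by rewrite /Psi unlock; vm_compute. Qed.

Lemma trunc_log_leq p n : trunc_log p n <= n.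
Proof.
case: (leqP p 1) => [|p_gt1].
  by case: p => [|[|]] // _; rewrite ?trunc_log0n ?trunc_log1n.
case: n => [|n]; first by rewrite trunc_log0.
apply: leq_trans (trunc_logP p_gt1 (ltn0Sn n)); exact/ltnW/ltn_expl.
Qed.

Lemma leq_expn_trunc_log p n k : 1 < p -> 0 < k ->
  (p ^ k <= n) = (k <= trunc_log p n).
Proof.
move=> p_gt1 k_gt0; apply/idP/idP => [|le_k]; first exact: trunc_log_max.
case: n le_k => [|n] le_k; first by rewrite trunc_log0 leqn0 in le_k; rewrite (eqP le_k) in k_gt0.
by apply: leq_trans (trunc_logP p_gt1 (ltn0Sn n)); rewrite leq_exp2l.
Qed.

Lemma sum_leq_indicator N T : T <= N -> \sum_(1 <= k < N.+1) (k <= T) = T.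
Proof.
elim: N T => [|N IH] T le_TN.
  by rewrite big_geq //; move: le_TN; rewrite leqn0 => /eqP->.
rewrite big_nat_recr //=; case: (leqP T N) => [le_T|lt_T]; first by rewrite IH // addn0.
have -> : T = N.+1 by apply/eqP; rewrite eqn_leq le_TN lt_T.
have -> : \sum_(1 <= k < N.+1) (k <= N.+1) = \sum_(1 <= k < N.+1) (k <= N).
  by apply: eq_big_nat => k /andP[_]; rewrite ltnS => kN; rewrite kN (leqW kN).
by rewrite IH //; lia.
Qed.

Lemma logn_Psi_sum p n N : prime p -> n <= N ->
  logn p (Psi n) = \sum_(1 <= k < N.+1) (k <= trunc_log p n).
Proof.
move=> p_pr le_nN; rewrite logn_Psi // sum_leq_indicator //.
exact: leq_trans (trunc_log_leq p n) le_nN.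
Qed.

Lemma logn_fact_widen p n N : prime p -> n <= N ->
  logn p n`! = \sum_(1 <= k < N.+1) n %/ p ^ k.
Proof.
move=> p_pr le_nN; rewrite logn_fact // [RHS](big_cat_nat _ (n := n.+1)) //=.
rewrite [X in _ + X]big1_seq ?addn0 // => k /andP[_].
rewrite mem_index_iota => /andP[nk _]; apply: divn_small.
exact: leq_trans nk (ltnW (ltn_expl _ (prime_gt1 p_pr))).
Qed.

(** * Chebyshev's weights *)

Lemma sawtooth_ge0 a : a %/ 2 + a %/ 3 + a %/ 5 <= a + a %/ 30.
Proof. lia. Qed.

Lemma sawtooth_le1 a : a + a %/ 30 <= a %/ 2 + a %/ 3 + a %/ 5 + 1.
Proof. lia. Qed.

Lemma sawtooth_small a : 0 < a -> a < 6 -> a %/ 2 + a %/ 3 + a %/ 5 + 1 <= a + a %/ 30.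
Proof. by case: a => [|[|[|[|[|[|]]]]]]. Qed.

Definition chebN m := (30 * m)`! * m`!.
Definition chebD m := (15 * m)`! * (10 * m)`! * (6 * m)`!.

Lemma chebN_gt0 m : 0 < chebN m. Proof. by rewrite muln_gt0 !fact_gt0. Qed.
Lemma chebD_gt0 m : 0 < chebD m. Proof. by rewrite !muln_gt0 !fact_gt0. Qed.

Lemma logn_chebN p m : prime p -> logn p (chebN m) =
  \sum_(1 <= k < (30 * m).+1) (30 * m %/ p ^ k + 30 * m %/ p ^ k %/ 30).
Proof.
move=> p_pr; rewrite /chebN lognM ?fact_gt0 // big_split /=.
rewrite (logn_fact_widen (N := 30 * m)) // (logn_fact_widen (n := m) (N := 30 * m)) //; last lia.
by congr (_ + _); apply: eq_bigr => k _; rewrite divnAC mulKn.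
Qed.

Lemma logn_chebD p m : prime p -> logn p (chebD m) =
  \sum_(1 <= k < (30 * m).+1)
    (30 * m %/ p ^ k %/ 2 + 30 * m %/ p ^ k %/ 3 + 30 * m %/ p ^ k %/ 5).
Proof.
move=> p_pr; rewrite /chebD !lognM ?muln_gt0 ?fact_gt0 // !big_split /=.
rewrite (logn_fact_widen (n := 15 * m) (N := 30 * m)) //; last lia.
rewrite (logn_fact_widen (n := 10 * m) (N := 30 * m)) //; last lia.
rewrite (logn_fact_widen (n := 6 * m) (N := 30 * m)) //; last lia.
congr (_ + _ + _); apply: eq_bigr => k _; rewrite divnAC.
- by rewrite (_ : 30 * m = 2 * (15 * m)) ?mulKn // mulnA.
- by rewrite (_ : 30 * m = 3 * (10 * m)) ?mulKn // mulnA.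
- by rewrite (_ : 30 * m = 5 * (6 * m)) ?mulKn // mulnA.
Qed.

Lemma chebN_dvdn m : chebN m %| chebD m * Psi (30 * m).
Proof.
apply: dvdn_logn_le; rewrite ?muln_gt0 ?chebN_gt0 ?chebD_gt0 ?Psi_gt0 ?fact_gt0 // => p p_pr.
rewrite lognM ?chebD_gt0 ?Psi_gt0 // logn_chebN // logn_chebD //.
rewrite (logn_Psi_sum (N := 30 * m)) // -big_split /=; apply: leq_sum => k _.
case: (leqP k (trunc_log p (30 * m))) => [_|lt_k]; first by rewrite sawtooth_le1.
suff -> : 30 * m %/ p ^ k = 0 by [].
apply: divn_small; case: k lt_k => [|k] lt_k; first by rewrite ltn0 in lt_k.
by rewrite ltnNge leq_expn_trunc_log ?prime_gt1 // -ltnNge.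
Qed.

Lemma chebD_Psi_dvdn m : chebD m * Psi (30 * m) %| chebN m * Psi (5 * m).
Proof.
apply: dvdn_logn_le; rewrite ?muln_gt0 ?chebN_gt0 ?chebD_gt0 ?Psi_gt0 ?fact_gt0 // => p p_pr.
rewrite (lognM _ (chebD_gt0 m)) ?(lognM _ (chebN_gt0 m)) ?Psi_gt0 // logn_chebN // logn_chebD //.
rewrite (logn_Psi_sum (n := 30 * m) (N := 30 * m)) //.
rewrite (logn_Psi_sum (n := 5 * m) (N := 30 * m)) //; last lia.
rewrite -!big_split /= big_nat_cond [X in _ <= X]big_nat_cond.
apply: leq_sum => k /andP[/andP[k_gt0 _] _].
have p_gt1 := prime_gt1 p_pr.
case: (leqP k (trunc_log p (5 * m))) => [_|lt_k5].
  by apply: leq_add; [exact: sawtooth_ge0 | exact: leq_b1].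
case: (leqP k (trunc_log p (30 * m))) => [le_k30|_]; last by rewrite !addn0 sawtooth_ge0.
rewrite addn0; apply: sawtooth_small.
  by rewrite divn_gt0 ?expn_gt0 ?prime_gt0 // leq_expn_trunc_log.
rewrite ltn_divLR ?expn_gt0 ?prime_gt0 //.
have : 5 * m < p ^ k by rewrite ltnNge leq_expn_trunc_log // -ltnNge.
lia.
Qed.

(* [chebK = 30^30 / (15^15 10^10 6^6)], the growth rate of [chebN m / chebD m]. *)
Definition chebK := 2 ^ 14 * 3 ^ 9 * 5 ^ 5.

Lemma chebK_gt0 : 0 < chebK. Proof. by rewrite /chebK !muln_gt0. Qed.

Lemma chebK_ge : 2 ^ 39 <= chebK.
Proof.
rewrite /chebK (_ : 39 = 14 + 14 + 11); last by [].
rewrite !expnD.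
by apply: leq_mul; first apply: leq_mul.
Qed.

Definition chebN_step m := \prod_(0 <= i < 30) (30 * m + i.+1) * m.+1.
Definition chebD_step m := \prod_(0 <= i < 15) (15 * m + i.+1) *
  \prod_(0 <= i < 10) (10 * m + i.+1) * \prod_(0 <= i < 6) (6 * m + i.+1).

Lemma factD n k : (n + k)`! = n`! * \prod_(0 <= i < k) (n + i.+1).
Proof.
elim: k => [|k IH]; first by rewrite addn0 big_geq // muln1.
by rewrite addnS factS IH big_nat_recr //= addnS; ring.
Qed.

Lemma chebN_S m : chebN m.+1 = chebN m * chebN_step m.
Proof.
rewrite /chebN /chebN_step (_ : 30 * m.+1 = 30 * m + 30); last lia.
by rewrite factD factS; ring.
Qed.

Lemma chebD_S m : chebD m.+1 = chebD m * chebD_step m.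
Proof.
rewrite /chebD /chebD_step (_ : 15 * m.+1 = 15 * m + 15); last lia.
rewrite (_ : 10 * m.+1 = 10 * m + 10); last lia.
rewrite (_ : 6 * m.+1 = 6 * m + 6); last lia.
by rewrite !factD; ring.
Qed.

(* Both steps expanded in [t = 30 m]: the factors of [chebN_step] prime to 30
   are traded against the surplus multiples of 6, 10, 15 in [chebD_step]. *)
Lemma chebN_step_factor m : let t := 30 * m in
  30 * chebN_step m = ((t+1)*(t+7)*(t+11)*(t+13)*(t+17)*(t+19)*(t+23)*(t+29)) *
   ((t+2)*(t+3)*(t+4)*(t+5)*(t+8)*(t+9)*(t+14)*(t+16)*(t+21)*(t+22)*(t+25)*(t+26)*(t+27)*(t+28)) *
   ((t+6)*(t+10)*(t+12)*(t+15)*(t+18)*(t+20)*(t+24)) * ((t+30)*(t+30)).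
Proof. by move=> t; rewrite /chebN_step !big_nat_recr //= big_geq // /t; ring. Qed.

Lemma chebD_step_factor m : let t := 30 * m in
  30 * chebK * chebD_step m =
   ((t+2)*(t+3)*(t+4)*(t+5)*(t+8)*(t+9)*(t+14)*(t+16)*(t+21)*(t+22)*(t+25)*(t+26)*(t+27)*(t+28)) *
   ((t+6)*(t+10)*(t+12)*(t+15)*(t+18)*(t+20)*(t+24)) *
   ((t+6)*(t+10)*(t+12)*(t+15)*(t+18)*(t+20)*(t+24)) * ((t+30)*(t+30)*(t+30)).
Proof. by move=> t; rewrite /chebD_step /chebK !big_nat_recr //= !big_geq // /t; ring. Qed.

Lemma chebN_step_le m : chebN_step m <= chebK * chebD_step m.
Proof.
rewrite -(leq_pmul2l (isT : 0 < 30)) mulnA chebN_step_factor chebD_step_factor.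
set t := 30 * m.
set C := (t+1)*(t+7)*(t+11)*(t+13)*(t+17)*(t+19)*(t+23)*(t+29).
set M := (t+2)*(t+3)*(t+4)*(t+5)*(t+8)*(t+9)*(t+14)*(t+16)*(t+21)*(t+22)*(t+25)*(t+26)*(t+27)*(t+28).
set D := (t+6)*(t+10)*(t+12)*(t+15)*(t+18)*(t+20)*(t+24).
have le_CD : C <= D * (t + 30) by repeat apply: leq_mul; rewrite leq_add2l.
have -> : C * M * D * ((t + 30) * (t + 30)) = (M * D * ((t + 30) * (t + 30))) * C by ring.
have -> : M * D * D * ((t + 30) * (t + 30) * (t + 30)) =
  (M * D * ((t + 30) * (t + 30))) * (D * (t + 30)) by ring.
exact: leq_mul.
Qed.

Lemma chebN_step_ge m : chebK * chebD_step m * (30 * m + 1) <= (30 * m.+1 + 1) * chebN_step m.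
Proof.
rewrite -(leq_pmul2l (isT : 0 < 30)) [X in X <= _]mulnA [X in X * _ <= _]mulnA mulnCA.
rewrite (_ : 30 * m.+1 + 1 = 30 * m + 31); last lia.
rewrite chebN_step_factor chebD_step_factor.
set t := 30 * m.
set M := (t+2)*(t+3)*(t+4)*(t+5)*(t+8)*(t+9)*(t+14)*(t+16)*(t+21)*(t+22)*(t+25)*(t+26)*(t+27)*(t+28).
set D := (t+6)*(t+10)*(t+12)*(t+15)*(t+18)*(t+20)*(t+24).
set C := (t+7)*(t+11)*(t+13)*(t+17)*(t+19)*(t+23)*(t+29).
have le_DC : D * (t + 30) <= C * (t + 31) by repeat apply: leq_mul; rewrite leq_add2l.
have -> : (t+1)*(t+7)*(t+11)*(t+13)*(t+17)*(t+19)*(t+23)*(t+29) = (t + 1) * C by rewrite /C; ring.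
have -> : M * D * D * ((t + 30) * (t + 30) * (t + 30)) * (t + 1) =
  (M * D * ((t + 30) * (t + 30)) * (t + 1)) * (D * (t + 30)) by ring.
have -> : (t + 31) * ((t + 1) * C * M * D * ((t + 30) * (t + 30))) =
  (M * D * ((t + 30) * (t + 30)) * (t + 1)) * (C * (t + 31)) by ring.
exact: leq_mul.
Qed.

Lemma chebN_le m : chebN m <= chebK ^ m * chebD m.
Proof.
elim: m => [|m IH] //; rewrite chebN_S chebD_S expnS.
have -> : chebK * chebK ^ m * (chebD m * chebD_step m) =
  (chebK ^ m * chebD m) * (chebK * chebD_step m) by ring.
exact: leq_mul IH (chebN_step_le m).
Qed.

Lemma chebN_ge m : chebK ^ m * chebD m <= (30 * m + 1) * chebN m.
Proof.
elim: m => [|m IH]; first by rewrite expn0 mul1n /chebD /chebN !muln0.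
rewrite chebN_S chebD_S expnS.
have -> : chebK * chebK ^ m * (chebD m * chebD_step m) =
  (chebK ^ m * chebD m) * (chebK * chebD_step m) by ring.
apply: leq_trans (leq_mul IH (leqnn _)) _.
have -> : (30 * m + 1) * chebN m * (chebK * chebD_step m) =
  chebN m * (chebK * chebD_step m * (30 * m + 1)) by ring.
have -> : (30 * m.+1 + 1) * (chebN m * chebN_step m) =
  chebN m * ((30 * m.+1 + 1) * chebN_step m) by ring.
exact: leq_mul (leqnn _) (chebN_step_ge m).
Qed.

Lemma chebK_exp_le_Psi m : chebK ^ m <= (30 * m + 1) * Psi (30 * m).
Proof.
have le_N : chebN m <= chebD m * Psi (30 * m).
  by apply: dvdn_leq; [rewrite muln_gt0 chebD_gt0 Psi_gt0 | exact: chebN_dvdn].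
have := leq_trans (chebN_ge m) (leq_mul (leqnn (30 * m + 1)) le_N).
by rewrite mulnCA mulnC leq_pmul2l // chebD_gt0.
Qed.

Lemma Psi_mul30_le m : Psi (30 * m) <= chebK ^ m * Psi (5 * m).
Proof.
have le_DPsi : chebD m * Psi (30 * m) <= chebN m * Psi (5 * m).
  by apply: dvdn_leq; [rewrite muln_gt0 chebN_gt0 Psi_gt0 | exact: chebD_Psi_dvdn].
have := leq_trans le_DPsi (leq_mul (chebN_le m) (leqnn (Psi (5 * m)))).
by rewrite (mulnC (chebK ^ m)) -mulnA leq_pmul2l // chebD_gt0.
Qed.

(* Iterating [x -> x/6] [d] times from [30 m] reaches [Psi 5]. *)
Lemma Psi_iter_le d m : m <= 6 ^ d ->
  Psi (30 * m) ^ 5 <= chebK ^ (6 * m + 5 * d) * Psi 5 ^ 5.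
Proof.
elim: d m => [|d IH] m.
  rewrite expn0 => m_le1; case: m m_le1 => [|[|]] // _.
    by rewrite !muln0 addn0 expn0 mul1n leq_exp2r // leq_Psi.
  apply: leq_trans (_ : (chebK ^ 1 * Psi 5) ^ 5 <= _).
    by rewrite leq_exp2r // -[30]muln1 Psi_mul30_le.
  by rewrite expnMn -expnM leq_mul2r leq_pexp2l ?chebK_gt0 ?orbT.
move=> m_le; set m' := (m + 5) %/ 6.
have le_m' : m' <= 6 ^ d by move: m_le; rewrite expnS /m'; lia.
have le_Psi : Psi (30 * m) <= chebK ^ m * Psi (30 * m').
  apply: leq_trans (Psi_mul30_le m) _; rewrite leq_mul2l leq_Psi ?orbT //.
  rewrite /m'; lia.
apply: leq_trans (_ : (chebK ^ m * Psi (30 * m')) ^ 5 <= _); first by rewrite leq_exp2r.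
rewrite expnMn -expnM; apply: leq_trans (leq_mul (leqnn _) (IH _ le_m')) _.
rewrite mulnA -expnD leq_mul2r leq_pexp2l ?chebK_gt0 ?orbT //; rewrite /m'; lia.
Qed.

Lemma prod_primes_if_le N s y : 0 < y ->
  \prod_(0 <= p < N | prime p) (if p < s then y else 1) <= y ^ s.
Proof.
move=> y_gt0; apply: leq_trans (_ : y ^ minn N s <= _); last by rewrite leq_pexp2l // geq_minr.
elim: N => [|N IH]; first by rewrite big_geq // expn_gt0 y_gt0.
rewrite big_mkcond big_nat_recr //= -big_mkcond.
case: (ltnP N s) => Ns.
  rewrite (_ : minn N.+1 s = (minn N s).+1); last by rewrite !minnE; lia.
  by rewrite expnS mulnC leq_mul //; case: (prime N).
rewrite (_ : minn N.+1 s = minn N s); last by rewrite !minnE; lia.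
by case: (prime N); rewrite muln1.
Qed.

(* Across a prime-free interval [(x, y]], only the primes below [sqrt y] can
   raise their exponent, each by a factor at most [y]. *)
Lemma Psi_prime_gap x y s : 0 < y -> x <= y ->
  (forall p, prime p -> x < p -> p <= y -> False) -> y < s * s ->
  Psi y <= Psi x * y ^ s.
Proof.
move=> y_gt0 le_xy no_prime lt_ys.
rewrite {1}/Psi (big_cat_nat _ (n := x.+1)) ?ltnS //=.
rewrite [X in _ * X <= _]big1_seq ?muln1; last first.
  move=> i /andP[i_pr]; rewrite mem_index_iota ltnS => /andP[xi iy].
  by case: (no_prime i i_pr xi iy).
apply: leq_trans (leq_mul (leqnn (Psi x)) (prod_primes_if_le x.+1 s y_gt0)).
rewrite /Psi -big_split /= big_nat_cond [X in _ <= X]big_nat_cond.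
apply: leq_prod => p /andP[/andP[_ px] p_pr].
have p_gt1 := prime_gt1 p_pr.
case: (ltnP p s) => ps.
  by apply: leq_trans (trunc_logP _ _) _; rewrite // leq_pmull // expn_gt0 prime_gt0.
rewrite muln1; apply: leq_trans (_ : p ^ 1 <= _); last first.
  by rewrite leq_exp2l // -leq_expn_trunc_log // expn1 -ltnS.
rewrite leq_exp2l // leqNgt; apply/negP => lt1.
have : p ^ 2 <= y by rewrite leq_expn_trunc_log.
by rewrite leqNgt (leq_trans lt_ys) // expnS expn1 leq_mul.
Qed.

Lemma mul64_le_exp2 h : 10 <= h -> 64 * h <= 2 ^ h.
Proof.
elim: h => // h IH; rewrite leq_eqVlt => /orP[/eqP<-|] //.
by rewrite ltnS expnS => h10; have := IH h10; lia.
Qed.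

Lemma log4_scale y : 4 ^ 9 < y ->
  exists h, [/\ y < 2 ^ h * 2 ^ h, 2 ^ h * 2 ^ h <= 4 * y & 10 <= h].
Proof.
move=> y_big; exists (trunc_log 4 y).+1; rewrite -expnMn.
have y_gt0 : 0 < y by apply: leq_trans y_big.
split; first exact: trunc_log_ltn.
  by rewrite expnS leq_mul2l trunc_logP.
by rewrite ltnS (trunc_log_max _ (ltnW y_big)).
Qed.

Lemma expn_le_exp2_contra k b e d w : 2 ^ b <= k -> w < b * d ->
  ~ k ^ (e + d) <= k ^ e * 2 ^ w.
Proof.
move=> le_k lt_w; have k_gt0 : 0 < k by apply: leq_trans le_k; rewrite expn_gt0.
have d_gt0 : 0 < d by move: lt_w; case: d; rewrite ?muln0.
rewrite expnD leq_pmul2l ?expn_gt0 ?k_gt0 // => le_kd.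
have le_2k : (2 ^ b) ^ d <= k ^ d by rewrite leq_exp2r.
have := leq_trans le_2k le_kd; rewrite -expnM leq_exp2l //.
by rewrite leqNgt lt_w.
Qed.

Lemma no_gap_exponents x c h : 200 * 1000 <= x -> c = (x + x %/ 2) %/ 30 ->
  2 ^ h * 2 ^ h <= 4 * (30 * c) -> 10 <= h ->
  10 * h + 30 + 10 * (h * 2 ^ h) < 39 * (5 * c - (6 * (x %/ 30 + 1) + 5 * h)).
Proof.
move=> x_big c_def le_uu h_ge10; have le_h := mul64_le_exp2 h_ge10.
move: le_h le_uu; set u := 2 ^ h => le_h le_uu.
have le_u : 1024 * u <= 120 * c.
  apply: leq_trans (_ : u * u <= _); last lia.
  have u_ge : 2 ^ 10 <= u by rewrite leq_exp2l.
  by rewrite leq_mul2r; apply/orP; right; exact: u_ge.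
have le_hu : 64 * (h * u) <= 120 * c.
  apply: leq_trans (_ : u * u <= _); last lia.
  by rewrite mulnA leq_mul2r le_h orbT.
rewrite c_def in le_u le_hu *; lia.
Qed.

(* A prime-free [(x, 3x/2]] would give, with [a = x/30 + 1], [c = (3x/2)/30]
   and [4^h] just above [30 c]:
   [chebK^c <= (30c + 1) Psi (30c) <= (30c + 1) Psi (30a) (30c)^(2^h)] and
   [Psi (30a)^5 <= chebK^(6a + 5h) 60^5], so [chebK^(5c - 6a - 5h) <= 2^O(h 2^h)],
   which fails as [5c - 6a] is about [x/20]. *)
Lemma prime_gap_absurd x : 200 * 1000 <= x ->
  ~ (forall p, prime p -> x < p -> p <= x + x %/ 2 -> False).
Proof.
move=> x_big no_prime.
set a := x %/ 30 + 1; set c := (x + x %/ 2) %/ 30; set y := 30 * c.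
have y_big : 4 ^ 9 < y by rewrite /y /c; lia.
have [h [lt_yu le_uy h_ge10]] := log4_scale y_big.
have uu : 2 ^ h * 2 ^ h = 2 ^ (2 * h) by rewrite -expnD addnn -mul2n.
have le_y1 : y + 1 <= 2 ^ (2 * h) by rewrite -uu addn1.
have low : chebK ^ c <= (y + 1) * Psi y := chebK_exp_le_Psi c.
have gap : Psi y <= Psi (30 * a) * y ^ (2 ^ h).
  apply: Psi_prime_gap => //; [rewrite /y /c; lia | rewrite /y /c; lia |].
  by move=> p p_pr ltp lep; apply: (no_prime p p_pr); rewrite /a /y /c in ltp lep *; lia.
have up : Psi (30 * a) ^ 5 <= chebK ^ (6 * a + 5 * h) * 2 ^ 30.
  rewrite (_ : 2 ^ 30 = (2 ^ 6) ^ 5); last by rewrite -expnM.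
  apply: leq_trans (Psi_iter_le (d := h) _) _.
    apply: leq_trans (_ : 2 ^ (2 * h) <= _); last by rewrite expnM leq_exp2r //; lia.
    by rewrite -uu; apply: leq_trans (ltnW lt_yu); rewrite /y /c /a; lia.
  by rewrite Psi5 leq_mul2l leq_exp2r ?orbT.
have le_y1_pow : (y + 1) ^ 5 <= 2 ^ (10 * h).
  by rewrite (_ : 10 * h = 2 * h * 5) ?(expnM 2 _ 5) ?leq_exp2r //; lia.
have le_y_pow : (y ^ 2 ^ h) ^ 5 <= 2 ^ (10 * (h * 2 ^ h)).
  rewrite (_ : 10 * (h * 2 ^ h) = 2 * h * 2 ^ h * 5) ?(expnM 2 _ 5) ?leq_exp2r //; last lia.
  by rewrite (expnM 2 _ (2 ^ h)) leq_exp2r ?expn_gt0 // ltnW // -addn1.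
have key : chebK ^ (5 * c) <= chebK ^ (6 * a + 5 * h) * 2 ^ (10 * h + 30 + 10 * (h * 2 ^ h)).
  rewrite mulnC expnM.
  apply: leq_trans (_ : ((y + 1) * (Psi (30 * a) * y ^ (2 ^ h))) ^ 5 <= _).
    by rewrite leq_exp2r // (leq_trans low) // leq_mul2l gap orbT.
  rewrite expnMn (expnMn (Psi _)); apply: leq_trans (leq_mul le_y1_pow (leq_mul up le_y_pow)) _.
  rewrite !expnD; apply: eq_leq; ring.
have exps := no_gap_exponents x_big (erefl c) le_uy h_ge10.
have le_e : 6 * a + 5 * h <= 5 * c by move: exps; rewrite /a; lia.
apply: (expn_le_exp2_contra (e := 6 * a + 5 * h) chebK_ge exps).
by rewrite subnKC.
Qed.

(** * A prime in (n, 3n/2] *)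

Definition three_halves_step a b := (a < b) && (2 * b <= 3 * a + 1).

Lemma path_three_halves_cover a s x :
  path three_halves_step a s -> all prime s -> a <= x -> x < last a s ->
  exists p, [/\ prime p, x < p & 2 * p <= 3 * x + 1].
Proof.
elim: s a => [|b s IH] a /=; first by move=> _ _ ax xa; have := leq_ltn_trans ax xa; rewrite ltnn.
move=> /andP[/andP[ab ba] s_path] /andP[b_pr s_pr] ax xl.
case: (ltnP x b) => xb; last exact: IH xb xl.
by exists b; split => //; apply: leq_trans ba _; rewrite leq_add2r leq_mul2l ax.
Qed.

Definition prime_ladder := [:: 3; 5; 7; 11; 13; 19; 23; 31; 43; 61; 89; 131; 193;
  283; 421; 631; 941; 1409; 2113; 3169; 4751; 7121; 10667; 15991; 23981; 35969;
  53951; 80923; 121379; 182059; 273083].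

Lemma prime_ladderP : [&& path three_halves_step 2 prime_ladder,
  all prime prime_ladder & 200 * 1000 <= last 2 prime_ladder].
Proof. by vm_compute. Qed.

Lemma prime_three_halves n : 1 < n ->
  exists p, [/\ prime p, n < p & 2 * p <= 3 * n + 1].
Proof.
move=> n_gt1; case: (ltnP n (200 * 1000)) => n_big.
  case/and3P: prime_ladderP => ladder_path ladder_pr ladder_last.
  exact: path_three_halves_cover ladder_path ladder_pr n_gt1 (leq_trans n_big ladder_last).
case: (boolP (has prime (iota n.+1 (n %/ 2)))) => [/hasP[p]|/hasPn no_prime].
  by rewrite mem_iota => /andP[lt_np lt_p] p_pr; exists p; split => //; lia.
exfalso; apply: (prime_gap_absurd n_big) => p p_pr lt_np le_p.
have : p \in iota n.+1 (n %/ 2) by rewrite mem_iota; apply/andP; split; lia.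
by move/no_prime; rewrite p_pr.
Qed.

Lemma bertrand n : 0 < n -> exists p, [/\ prime p, n < p & p <= 2 * n].
Proof.
case: n => [|[_|n _]] //; first by exists 2.
have [p [p_pr lt_np le_p]] := prime_three_halves (isT : 1 < n.+2).
by exists p; split => //; lia.
Qed.

(** * The functions S_r *)

Lemma next_primeP n : [/\ prime (next_prime n), n < next_prime n &
  forall p, prime p -> n < p -> next_prime n <= p].
Proof.
rewrite /next_prime; case: ex_minnP => m /andP[lt_nm m_pr] m_min.
by split => // p p_pr lt_np; apply: m_min; rewrite lt_np p_pr.
Qed.

Lemma nth_prime_gt i : i < nth_prime i.
Proof.
elim: i => [|i IH] //=; have [_ lt_next _] := next_primeP (nth_prime i).
exact: leq_ltn_trans IH lt_next.
Qed.

Lemma nth_prime_bidx_le r : 0 < r -> nth_prime (bidx r) <= r.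
Proof. by move=> r_gt0; rewrite /bidx; elim/big_ind: _ => // x y; rewrite /maxn; case: ifP. Qed.

Lemma nth_prime_bidx_gt r : r < nth_prime (bidx r).+1.
Proof.
rewrite ltnNge; apply/negP => le_r.
have lt_b : (bidx r).+1 < r.+1 by rewrite ltnS (leq_trans (ltnW (nth_prime_gt _))).
have := @leq_bigmax_cond _ (fun b : 'I_r.+1 => nth_prime b <= r) (fun b => b : nat)
  (Ordinal lt_b) le_r.
by rewrite -/(bidx r) /= ltnn.
Qed.

Lemma nth_prime_bidx_least r : 0 < r -> let q := nth_prime (bidx r).+1 in
  [/\ prime q, r < q & forall p, prime p -> r < p -> q <= p].
Proof.
move=> r_gt0 /=; have [q_pr _ q_min] := next_primeP (nth_prime (bidx r)).
split => [||p p_pr lt_rp] //; first exact: nth_prime_bidx_gt.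
by apply: q_min => //; apply: leq_ltn_trans (nth_prime_bidx_le r_gt0) lt_rp.
Qed.

Lemma S_prime_pow r p k : prime p -> 0 < k ->
  S r (p ^ k) = if p <= r then 0 else p ^ k.-1 * (p - r).
Proof. by move=> p_pr k_gt0; rewrite /S primesX // primes_prime // big_seq1 pfactorK. Qed.

Lemma S_prime_pow_gt r p k : prime p -> 0 < k -> r < p -> S r (p ^ k) = p ^ k.-1 * (p - r).
Proof. by move=> p_pr k_gt0 lt_rp; rewrite S_prime_pow // leqNgt lt_rp. Qed.

Lemma S_prime_gt r p : prime p -> r < p -> S r p = p - r.
Proof. by move=> p_pr lt_rp; rewrite -{1}(expn1 p) S_prime_pow_gt // mul1n. Qed.

Lemma S_coprime r a b : 0 < a -> 0 < b -> coprime a b -> S r (a * b) = S r a * S r b.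
Proof.
move=> a_gt0 b_gt0 co_ab.
have disj q : q \in primes a -> q \notin primes b.
  rewrite !mem_primes => /and3P[q_pr _ q_a]; apply/negP => /and3P[_ _ q_b].
  have : q %| gcdn a b by rewrite dvdn_gcd q_a q_b.
  by rewrite (eqP co_ab) dvdn1 => /eqP q1; rewrite q1 in q_pr.
have pe : perm_eq (primes (a * b)) (primes a ++ primes b).
  apply: uniq_perm; first exact: primes_uniq.
    by rewrite cat_uniq !primes_uniq /= andbT; apply/hasPn => q /(contraL (@disj q)).
  by move=> q; rewrite mem_cat primesM.
have logn0 q n : q \notin primes n -> logn q n = 0.
  by move=> q_n; apply/eqP; rewrite -leqn0 leqNgt logn_gt0.
rewrite /S (perm_big _ pe) big_cat /=; congr (_ * _); apply: eq_big_seq => q q_in.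
  by rewrite lognM // (logn0 q b (disj q q_in)) addn0.
by rewrite lognM // (logn0 q a (contraL (@disj q) q_in)).
Qed.

Lemma notin_F r n m : inB r m -> n < m -> S r m <= S r n -> ~ inF r n.
Proof. by move=> Bm lt_nm le_S [_ /(_ m Bm lt_nm)]; rewrite ltnNge le_S. Qed.

Lemma prime_pow_notin_F r p k : prime p -> 0 < k -> p <= r -> ~ inF r (p ^ k).
Proof. by move=> p_pr k_gt0 le_pr [[_]]; rewrite S_prime_pow // le_pr. Qed.

Section LeastPrimeAbove.

Variables r q : nat.
Hypothesis r_gt0 : 0 < r.
Hypothesis q_prime : prime q.
Hypothesis r_lt_q : r < q.
Hypothesis q_least : forall p, prime p -> r < p -> q <= p.

Lemma least_prime_le_double : q <= 2 * r.
Proof.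
have [p [p_pr lt_rp le_p]] := bertrand r_gt0.
exact: leq_trans (q_least p_pr lt_rp) le_p.
Qed.

Lemma prime_after_least : exists P, [/\ prime P, q < P & P <= q + r].
Proof.
have [P [P_pr lt_qP le_P]] := prime_three_halves (prime_gt1 q_prime).
by exists P; split => //; have := least_prime_le_double; lia.
Qed.

Lemma least_prime_pow_notin_F k : 1 < k -> ~ inF r (q ^ k).
Proof.
case: k => [|[|j]] // _; have q_gt0 := prime_gt0 q_prime.
have [P [P_pr lt_qP le_P]] := prime_after_least.
have lt_rP : r < P := ltn_trans r_lt_q lt_qP.
have co_qP : coprime (q ^ j.+1) P.
  by rewrite coprime_pexpl // prime_coprime // dvdn_prime2 // ltn_eqF.
have S_m : S r (q ^ j.+1 * P) = q ^ j * (q - r) * (P - r).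
  by rewrite S_coprime ?expn_gt0 ?q_gt0 ?prime_gt0 // S_prime_pow_gt // S_prime_gt.
apply: (notin_F (m := q ^ j.+1 * P)).
- split; first by rewrite muln_gt0 expn_gt0 q_gt0 prime_gt0.
  by rewrite S_m !muln_gt0 expn_gt0 q_gt0 !subn_gt0 r_lt_q lt_rP.
- by rewrite (expnSr q j.+1) ltn_mul2l expn_gt0 q_gt0.
- rewrite S_m S_prime_pow_gt //= expnSr mulnAC leq_mul2r leq_mul2l.
  by apply/orP; right; apply/orP; right; lia.
Qed.

Lemma cube_notin_F p : prime p -> q < p -> ~ inF r (p ^ 3).
Proof.
move=> p_pr lt_qp; have q_gt0 := prime_gt0 q_prime; have p_gt0 := prime_gt0 p_pr.
set n := p ^ 2 %/ q.
have n_gt0 : 0 < n.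
  by rewrite divn_gt0 // (leq_trans (ltnW lt_qp)) // expnS expn1 leq_pmulr.
have [P [P_pr lt_nP le_P]] := bertrand n_gt0.
have lt_p2 : p ^ 2 < q * P.
  apply: leq_trans (_ : (n + 1) * q <= _); last by rewrite mulnC leq_mul2l addn1 lt_nP orbT.
  by rewrite {1}(divn_eq (p ^ 2) q) mulnDl mul1n ltn_add2l ltn_pmod.
have lt_pP : p < P.
  rewrite ltnNge; apply/negP => le_Pp; move: lt_p2; rewrite ltnNge expnS expn1.
  by rewrite leq_mul // ltnW.
have lt_rp := ltn_trans r_lt_q lt_qp; have lt_rP := ltn_trans lt_rp lt_pP.
have co : coprime (p * q) P.
  rewrite coprimeMl !prime_coprime // !dvdn_prime2 // !ltn_eqF //.
  exact: ltn_trans lt_qp lt_pP.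
have S_m : S r (p * q * P) = (p - r) * (q - r) * (P - r).
  rewrite S_coprime ?muln_gt0 ?p_gt0 ?q_gt0 ?prime_gt0 //.
  rewrite S_coprime ?p_gt0 ?q_gt0 ?prime_coprime ?dvdn_prime2 ?gtn_eqF //.
  by rewrite !S_prime_gt.
apply: (notin_F (m := p * q * P)).
- split; first by rewrite !muln_gt0 p_gt0 q_gt0 prime_gt0.
  by rewrite S_m !muln_gt0 !subn_gt0 lt_rp r_lt_q lt_rP.
- by rewrite (expnS p 2) -mulnA ltn_mul2l p_gt0.
- rewrite S_m S_prime_pow_gt // -mulnA mulnC leq_mul2r; apply/orP; right.
  have le_nq : n * q <= p ^ 2 by rewrite leq_divM.
  apply: leq_trans le_nq; apply: leq_trans (_ : (q - r) * n.*2 <= _).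
    by rewrite leq_mul2l (leq_trans (leq_subr r P)) ?orbT // -mul2n.
  rewrite -mul2n mulnA mulnC leq_mul2l; apply/orP; right.
  by have := least_prime_le_double; lia.
Qed.

End LeastPrimeAbove.

Theorem theorem3p2 (r p : nat) :
  0 < r -> prime p ->
  ~ inF r (nth_prime (bidx r).+1 ^ 2) /\ ~ inF r (p ^ 3).
Proof.
move=> r_gt0 p_pr; have [q_pr lt_rq q_least] := nth_prime_bidx_least r_gt0.
split; first exact: least_prime_pow_notin_F.
have [le_pr|lt_rp] := leqP p r; first exact: prime_pow_notin_F.
have := q_least p p_pr lt_rp; rewrite leq_eqVlt => /orP[/eqP <-|lt_qp].
- exact: least_prime_pow_notin_F.
- exact: cube_notin_F lt_qp.
Qed.
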